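(* Let $n=p'^{\,2}q$ where $p',q$ are distinct primes both at least $7$, and let $A=S(n)$. Then $D_A(n)=5$.
   Context: $\mathbb{Z}_n$ is the integers mod $n$, $U(n)$ its unit group. For nonempty $A\subseteq\mathbb{Z}_n\setminus\{0\}$, a sequence $(x_1,\ldots,x_k)$ is an $A$-weighted zero-sum sequence if $\sum a_ix_i=0$ for some $a_i\in A$; $D_A(n)$ is the least $k$ such that every length-$k$ sequence in $\mathbb{Z}_n$ has a nonempty $A$-weighted zero-sum subsequence. For odd $n=\prod p_i^{r_i}$ and $a\in U(n)$, $\left(\frac{a}{n}\right)=\prod\left(\frac{a}{p_i}\right)^{r_i}$ (Legendre symbols of images mod $p_i$), and $S(n)$ is the kernel of $a\mapsto\left(\frac{a}{n}\right)$ on $U(n)$. *)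

From mathcomp Require Import all_boot all_order all_algebra.
Set Implicit Arguments. Unset Strict Implicit. Unset Printing Implicit Defensive.
Import GRing.Theory.
Local Open Scope ring_scope.

Definition legendre (p a : nat) : int :=
  if (p %| a)%N then 0
  else if [exists x : 'I_p, ((x * x) %% p == a %% p)%N] then 1 else -1.

Definition jacobi (n : nat) (a : 'Z_n) : int :=
  \prod_(p <- primes n) (legendre p (val a)) ^+ (logn p n).

Definition Sn (n : nat) : {set 'Z_n} :=
  [set a : 'Z_n | (a \is a GRing.unit) && (jacobi a == 1)].

Definition has_Azs (n : nat) (A : {set 'Z_n}) (k : nat) (x : 'I_k -> 'Z_n) : Prop :=
  exists I : {set 'I_k}, I != set0 /\
    exists a : 'I_k -> 'Z_n, (forall i, i \in I -> a i \in A) /\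
      \sum_(i in I) a i * x i = 0.

Definition Azs_prop (n : nat) (A : {set 'Z_n}) (k : nat) : Prop :=
  forall x : 'I_k -> 'Z_n, has_Azs A x.

Definition is_DA (n : nat) (A : {set 'Z_n}) (d : nat) : Prop :=
  Azs_prop A d /\ forall k, Azs_prop A k -> (d <= k)%N.

From mathcomp Require Import all_boot all_order all_algebra.
From mathcomp Require Import cyclic finfield.

(** By the Chinese remainder theorem 'Z_n is 'Z_(p^2) x 'F_q, and since the
    Legendre symbol modulo p enters (a/n) squared, S(n) corresponds to
    U(p^2) x (nonzero squares of 'F_q).  A subsequence therefore has an
    S(n)-weighted zero sum iff its reduction modulo p^2 has a unit-weighted
    zero sum and its reduction modulo q a square-weighted one.  Both are
    decided by counting: modulo p^2 by the numbers of units and of nonzero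
    non-units among the terms, modulo q by the number of nonzero terms and,
    when there are exactly two of them, by whether minus their ratio is a
    square.  So only the class of each term matters, and D_A(n) = 5 reduces to
    a finite check: every pattern of five classes admits a good subsequence,
    while the classes of (q, pq, p^2, p^2 c), with -c a non-square modulo q,
    admit none. *)

Set Implicit Arguments.
Unset Strict Implicit.
Unset Printing Implicit Defensive.

Import GRing.Theory.

Definition unit_admissible (nU nV : nat) : bool :=
  (nU != 1) && ~~ ((nU == 0) && (nV == 1)).

Definition square_admissible (e : bool) (nW nN : nat) : bool :=
  (nW != 1) && ((nW == 2) ==> (odd nN != e)).

Fixpoint words (T : Type) (a : seq T) (k : nat) : seq (seq T) :=
  if k is k'.+1 then [seq x :: w | x <- a, w <- words a k'] else [:: [::]].

Lemma wordsP (T : eqType) (a : seq T) k w :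
  reflect (all (mem a) w /\ size w = k) (w \in words a k).
Proof.
elim: k w => [|k IHk] w /=.
  by rewrite inE; case: w => [|x w]; constructor=> //; case.
apply: (iffP allpairsP) => [[[x v] [/= xa /IHk[av sv] ->]]|].
  by rewrite /= xa av sv.
case: w => [|x w] [//= /andP[xa av] [sv]].
by exists (x, w); split=> //; apply/IHk.
Qed.

(* In [admissible e ys zs m], the word [ys] lists the classes of the terms
   modulo p^2 (0: unit, 1: nonzero non-unit, 2: zero), [zs] their classes
   modulo q (0: zero, 1: nonzero square, 2: non-square), [e] says whether -1
   is a square modulo q, and the mask [m] selects a subsequence. *)
Definition unit_admissible_mask (ys : seq nat) (m : bitseq) : bool :=
  has id m && unit_admissible (count_mem 0 (mask m ys)) (count_mem 1 (mask m ys)).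

Definition square_admissible_mask (e : bool) (zs : seq nat) (m : bitseq) : bool :=
  square_admissible e (count (predC1 0) (mask m zs)) (count_mem 2 (mask m zs)).

Definition admissible (e : bool) (ys zs : seq nat) (m : bitseq) : bool :=
  unit_admissible_mask ys m && square_admissible_mask e zs m.

(* Tabulating each admissibility test once per word keeps the exhaustive
   check over all pairs of words down to comparing bit vectors. *)
Lemma five_terms_tabulated :
  let ms := words [:: false; true] 5 in
  let ts := words [:: 0; 1; 2] 5 in
  let zvs := [seq [seq square_admissible_mask e zs m | m <- ms]
             | zs <- ts, e <- [:: false; true]] in
  all (fun ys => let yv := [seq unit_admissible_mask ys m | m <- ms] in
         all (fun zv => has id [seq b.1 && b.2 | b <- zip yv zv]) zvs) ts.
Proof. by vm_compute. Qed.

Lemma five_terms_admissible e ys zs :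
  ys \in words [:: 0; 1; 2] 5 -> zs \in words [:: 0; 1; 2] 5 ->
  has (admissible e ys zs) (words [:: false; true] 5).
Proof.
move=> ys5 zs5; have /allP/(_ _ ys5)/allP := five_terms_tabulated.
have zvP : [seq square_admissible_mask e zs m | m <- words [:: false; true] 5] \in
    [seq [seq square_admissible_mask e zs m | m <- words [:: false; true] 5]
    | zs <- words [:: 0; 1; 2] 5, e <- [:: false; true]].
  by apply: (allpairs_f (fun zs e => [seq square_admissible_mask e zs m | m <- _])); case: e.
move=> /(_ _ zvP); elim: (words _ 5) => //= m ms IHms /orP[Am | /IHms ->].
  by rewrite [admissible _ _ _ _]Am.
by rewrite orbT.
Qed.

Lemma four_terms_inadmissible e :
  ~~ has (admissible e [:: 0; 1; 2; 2] [:: 0; 0; 1; if e then 2 else 1])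
         (words [:: false; true] 4).
Proof. by case: e; vm_compute. Qed.

Definition set_mask (T : finType) (I : {set T}) : bitseq := [seq i \in I | i <- enum T].

Lemma has_set_mask (T : finType) (I : {set T}) : has id (set_mask I) = (I != set0).
Proof.
rewrite has_map; apply/hasP/set0Pn => [[i _ Ii] | [i Ii]]; first by exists i.
by exists i; rewrite ?mem_enum.
Qed.

Lemma count_set_mask (T : finType) (I : {set T}) (f : T -> nat) (P : pred nat)
    (Q : pred T) :
  (forall i, P (f i) = Q i) ->
  count P (mask (set_mask I) [seq f i | i <- enum T]) = #|[set i in I | Q i]|.
Proof.
move=> PQ; rewrite -map_mask count_map -filter_mask count_filter enumT cardE size_filter.
by apply: eq_count => i; rewrite !inE /= PQ andbC.
Qed.

Lemma set_mask_nth k (m : bitseq) : size m = k -> set_mask [set i : 'I_k | nth false m i] = m.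
Proof.
move=> <-; rewrite -[RHS](mkseq_nth false) /mkseq -val_enum_ord -map_comp.
by apply: eq_map => i; rewrite inE.
Qed.

Lemma map_nth_enum (T U : Type) (x0 : T) (s : seq T) (f : T -> U) :
  [seq f (nth x0 s i) | i : 'I_(size s) <- enum 'I_(size s)] = map f s.
Proof. by rewrite -[in RHS](mkseq_nth x0 s) /mkseq -val_enum_ord -!map_comp. Qed.

Lemma card_set2_pred (T : finType) (a b : T) (P : pred T) :
  a != b -> #|[set i in [set a; b] | P i]| = P a + P b.
Proof.
move=> ab; rewrite (cardsD1 a) (cardsD1 b) !inE !eqxx (eq_sym b) ab orbT /=.
suff -> : [set i in [set a; b] | P i] :\ a :\ b = set0 by rewrite cards0 addn0.
by apply/setP => i; rewrite !inE; case: (i =P a); case: (i =P b).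
Qed.

Lemma exists_pair_same_class (T : finType) (W : {set T}) (c : T -> bool) :
  2 < #|W| -> exists i0 i1 j,
    [/\ i0 \in W, i1 \in W, j \in W, i0 != i1 & [/\ j != i0, j != i1 & c i0 = c i1]].
Proof.
move=> W_gt2.
have [i0 [i1 [Wi0 Wi1 i01 ci01]]] :
    exists i0 i1, [/\ i0 \in W, i1 \in W, i0 != i1 & c i0 = c i1].
  have := cardsID [set i | c i] W; case: (ltnP 1 #|W :&: [set i | c i]|) => [|le1 sumW].
    move=> /card_gt1P[i0 [i1 [/setIP[Wi0 ci0] /setIP[Wi1 ci1] i01]]] _.
    by exists i0, i1; rewrite !inE in ci0 ci1; rewrite ci0 ci1.
  have /card_gt1P[i0 [i1 [/setDP[Wi0 ci0] /setDP[Wi1 ci1] i01]]] :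
      1 < #|W :\: [set i | c i]|.
    by rewrite -(ltn_add2l #|W :&: [set i | c i]|) sumW (leq_trans _ W_gt2) // addn1 ltnS.
  by exists i0, i1; rewrite !inE in ci0 ci1; rewrite (negbTE ci0) (negbTE ci1).
have /card_gt0P[j /setD1P[ji1 /setD1P[ji0 Wj]]] : 0 < #|W :\ i0 :\ i1|.
  move: W_gt2; rewrite (cardsD1 i0) Wi0 (cardsD1 i1 (W :\ i0)) !inE eq_sym i01 Wi1.
  by rewrite !add1n !ltnS.
by exists i0, i1, j.
Qed.

Local Open Scope ring_scope.

Definition weighted_zero_sum (R : pzRingType) (T : finType) (P : pred R)
    (I : {set T}) (x : T -> R) : Prop :=
  exists2 w : T -> R, {in I, forall i, P (w i)} & \sum_(i in I) w i * x i = 0.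

Lemma weighted_zero_sum_support (R : pzRingType) (T : finType) (P : pred R)
    (I : {set T}) (x : T -> R) :
  P 1 -> weighted_zero_sum P I x <-> weighted_zero_sum P [set i in I | x i != 0] x.
Proof.
set W := [set i in I | _]; move=> P1.
have sumW w : \sum_(i in I) w i * x i = \sum_(i in W) w i * x i.
  rewrite (bigID (fun i => x i != 0)) /= [X in _ + X]big1 ?addr0 => [|i /andP[_]].
    by apply: eq_bigl => i; rewrite inE.
  by rewrite negbK => /eqP->; rewrite mulr0.
split=> -[w Pw sum0].
  by exists w; rewrite -?sumW // => i; rewrite inE => /andP[/Pw].
exists (fun i => if i \in W then w i else 1) => [i _|]; first by case: ifP => // /Pw.
by rewrite sumW -[RHS]sum0; apply: eq_bigr => i ->.
Qed.

Lemma has_AzsE n (A : {set 'Z_n}) k (x : 'I_k -> 'Z_n) :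
  has_Azs A x <->
  exists2 I : {set 'I_k}, I != set0 & weighted_zero_sum [pred a | a \in A] I x.
Proof.
split=> [[I [I0 [a [aA sum0]]]] | [I I0 [a aA sum0]]]; exists I => //; first by exists a.
by split=> //; exists a.
Qed.

Lemma Azs_prop_widen n (A : {set 'Z_n}) k l : (k <= l)%N -> Azs_prop A k -> Azs_prop A l.
Proof.
move=> kl Ak x; have /has_AzsE[I I0 [a aA sum0]] := Ak (fun j => x (widen_ord kl j)).
have wK j : insub (val j) = Some j := valK j.
apply/has_AzsE; exists (widen_ord kl @: I); first by rewrite imset_eq0.
exists (fun i => if insub (val i) is Some j then a j else 0) => [i /imsetP[j Ij ->] | ].
  by rewrite /= wK; apply: aA.
rewrite big_imset /=; last by move=> i j _ _ /(congr1 val) ij; apply: val_inj.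
by rewrite -[RHS]sum0; apply: eq_bigr => j _; rewrite wK.
Qed.

(** * Squares in finite fields *)

Section FiniteFieldSquares.
Variable F : finFieldType.

Definition square (x : F) : bool := [exists s, x == s ^+ 2].
Definition nonzero_square (x : F) : bool := (x != 0) && square x.

Lemma squareP x : reflect (exists s, x = s ^+ 2) (square x).
Proof. by apply: (iffP existsP) => [[s /eqP]|[s ->]]; exists s. Qed.

Lemma square_sqr s : square (s ^+ 2).
Proof. by apply/squareP; exists s. Qed.

Lemma square0 : square (0 : F).
Proof. by apply/squareP; exists 0; rewrite expr0n. Qed.

Lemma square1 : square (1 : F).
Proof. by apply/squareP; exists 1; rewrite expr1n. Qed.

Lemma square_invE x : square x^-1 = square x.
Proof.
apply/squareP/squareP => -[s Ds]; exists s^-1; rewrite exprVn -Ds //.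
by rewrite invrK.
Qed.

Lemma finField_expf_unity (x : F) : x != 0 -> x ^+ #|F|.-1 = 1.
Proof.
move=> x0; apply: (mulfI x0); rewrite mulr1 -exprS prednK ?expf_card //.
exact: ltnW (finNzRing_gt1 F).
Qed.

Lemma finField_prim_root : exists z : F, #|F|.-1.-primitive_root z.
Proof.
have card_gt1 := finNzRing_gt1 F.
have /hasP[z _ prim_z] : has #|F|.-1.-primitive_root (enum (predC1 (0 : F))).
  apply: has_prim_root; rewrite ?enum_uniq -?cardE ?cardC1 //.
    by rewrite -ltnS prednK // ltnW.
  by apply/allP => x; rewrite mem_enum => x0; apply/unity_rootP/finField_expf_unity.
by exists z.
Qed.

Hypothesis F_odd : odd #|F|.

Lemma square_prim_exprE (z : F) i :
  #|F|.-1.-primitive_root z -> square (z ^+ i) = ~~ odd i.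
Proof.
move=> prim_z; apply/squareP/idP => [[s Ds]|even_i]; last first.
  by exists (z ^+ i./2); rewrite -exprM muln2 -[in LHS](odd_double_half i) (negbTE even_i).
have card_gt1 := finNzRing_gt1 F.
have z0 : z != 0 by rewrite (prim_root_eq0 prim_z) -lt0n -ltnS prednK // ltnW.
have s0 : s != 0 by move: (expf_neq0 i z0); rewrite Ds expf_eq0.
have [j Ds'] := prim_rootP prim_z (finField_expf_unity s0).
move/eqP: Ds; rewrite Ds' -exprM (eq_prim_root_expr prim_z) => /eqP/(congr1 odd).
have even_card : ~~ odd #|F|.-1 by rewrite -subn1 oddB ?F_odd // ltnW.
by rewrite !odd_mod ?(negbTE even_card) // oddM andbF => ->.
Qed.

Lemma square_mulE (x y : F) :
  x != 0 -> y != 0 -> square (x * y) = (square x == square y).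
Proof.
have [z prim_z] := finField_prim_root.
move=> /finField_expf_unity/(prim_rootP prim_z)[i ->].
move=> /finField_expf_unity/(prim_rootP prim_z)[j ->].
by rewrite -exprD !square_prim_exprE // oddD; case: (odd i); case: (odd j).
Qed.

Lemma exists_nonsquare : exists x, ~~ square x.
Proof.
by have [z prim_z] := finField_prim_root; exists z; rewrite -[z]expr1 square_prim_exprE.
Qed.

Lemma nonzero_squareM x y :
  nonzero_square x -> nonzero_square y -> nonzero_square (x * y).
Proof.
move=> /andP[x0 sx] /andP[y0 sy].
by rewrite /nonzero_square mulf_neq0 // square_mulE // sx sy.
Qed.

Lemma nonzero_squareV x : nonzero_square x^-1 = nonzero_square x.
Proof. by rewrite /nonzero_square invr_eq0 square_invE. Qed.

Lemma nonzero_square_div (x y : F) :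
  x != 0 -> y != 0 -> nonzero_square (x / y) = (square x == square y).
Proof.
move=> x0 y0; rewrite /nonzero_square mulf_neq0 ?invr_eq0 //.
by rewrite square_mulE ?invr_eq0 ?square_invE.
Qed.

End FiniteFieldSquares.

Arguments nonzero_square {F}.

Section PrimeFieldSquares.
Variable q : nat.
Hypotheses (q_pr : prime q) (q_ge7 : (7 <= q)%N).
Local Notation F := 'F_q.

Lemma Fp_odd : odd #|F|.
Proof. by rewrite card_Fp //; case/even_prime: q_pr => // q2; move: q_ge7; rewrite q2. Qed.

Lemma natFp_eq0 k : ((k%:R : F) == 0) = (q %| k)%N.
Proof. by rewrite -(val_eqE (k%:R : F) 0) /= val_Fp_nat. Qed.

Lemma natFp_neq0 k : (0 < k < q)%N -> (k%:R : F) != 0.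
Proof.
case/andP => k_gt0 k_lt_q; rewrite natFp_eq0.
by apply: contraTN k_lt_q => /(dvdn_leq k_gt0); rewrite -leqNgt.
Qed.

Lemma square_natE v :
  square (v%:R : F) = [exists x : 'I_q, (x * x %% q == v %% q)%N].
Proof.
apply/squareP/existsP => [[s Dv] | [x /eqP Dx]].
  have s_lt_q : (s < q)%N by have := ltn_ord s; rewrite [X in (_ < X)%N -> _]Fp_cast.
  exists (Ordinal s_lt_q); apply/eqP => /=.
  by rewrite -!(val_Fp_nat q_pr) natrM natr_Zp Dv expr2.
by exists (x : nat)%:R; rewrite -(Fp_nat_mod q_pr) -Dx Fp_nat_mod // natrM expr2.
Qed.

Lemma nonzero_square1 : nonzero_square (1 : F).
Proof. by rewrite /nonzero_square oner_eq0 square1. Qed.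

(* The square class is handled by scaling 3^2 + 4^2 = 5^2, the other one by
   scaling m = (m - 1) + 1 for the least natural number m that is not a
   square modulo q. *)
Lemma sum_of_two_squares (c : F) : c != 0 ->
  exists a b, [/\ nonzero_square a, nonzero_square b & a + b = c].
Proof.
move=> c_neq0.
have scale (d a b : F) : d != 0 -> square d = square c ->
    nonzero_square a -> nonzero_square b -> a + b = d ->
    exists a b, [/\ nonzero_square a, nonzero_square b & a + b = c].
  move=> d_neq0 sdc sa sb abd; have scd : nonzero_square (c / d).
    by rewrite nonzero_square_div ?Fp_odd // eq_sym; apply/eqP.
  exists (c / d * a), (c / d * b); split; try exact: (nonzero_squareM Fp_odd scd).
  by rewrite -mulrDr abd divfK.
have sqr_nat k : (0 < k < q)%N -> nonzero_square ((k ^ 2)%:R : F).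
  by move=> k_lt_q; rewrite /nonzero_square natrX expf_neq0 ?natFp_neq0 ?square_sqr.
have [sq_c | nsq_c] := boolP (square c).
  have [/andP[n5 _] n3 n4] : [/\ nonzero_square ((5 ^ 2)%:R : F),
      nonzero_square ((3 ^ 2)%:R : F) & nonzero_square ((4 ^ 2)%:R : F)].
    by split; apply: sqr_nat; rewrite (leq_trans _ q_ge7).
  apply: (scale _ _ _ n5 _ n3 n4); last by rewrite -natrD.
  by rewrite natrX square_sqr sq_c.
have [w nsq_w] := exists_nonsquare Fp_odd.
have ex_ns : exists k, ~~ square (k%:R : F) by exists (val w); rewrite natr_Zp.
have [m nsq_m min_m] := ex_minnP ex_ns.
have m_gt1 : (1 < m)%N.
  by case: m nsq_m {min_m} => [|[|]] // /negP[]; rewrite ?square0 ?square1.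
have m_lt_q : (m < q)%N.
  apply: (leq_ltn_trans (min_m (val w) _)); first by rewrite natr_Zp.
  by have := ltn_ord w; rewrite [X in (_ < X)%N -> _]Fp_cast.
have m_neq0 : (m%:R : F) != 0 by rewrite natFp_neq0 // m_lt_q ltnW.
have sq_m1 : nonzero_square (m.-1%:R : F).
  apply/andP; split.
    by rewrite natFp_neq0 // -ltnS prednK ?m_gt1 ?(ltn_trans _ m_lt_q) // ltnW.
  by apply: contraT => /min_m; rewrite leqNgt ltn_predL ltnW.
apply: (scale _ _ _ m_neq0 _ sq_m1 nonzero_square1).
  by rewrite (negbTE nsq_m) (negbTE nsq_c).
by rewrite natr1 prednK // ltnW.
Qed.

Lemma nonzero_square_opp_ratio (z0 z1 : F) : z0 != 0 -> z1 != 0 ->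
  nonzero_square (- z1 / z0) = (square (-1 : F) == (square z0 == square z1)).
Proof.
move=> z0_neq0 z1_neq0; have Fodd := Fp_odd.
rewrite -[- z1]mulN1r -mulrA /nonzero_square !mulf_neq0 ?oppr_eq0 ?oner_eq0 ?invr_eq0 //=.
rewrite square_mulE ?square_mulE ?square_invE ?mulf_neq0 ?oppr_eq0 ?oner_eq0 ?invr_eq0 //.
by rewrite (eq_sym (square z1)).
Qed.

Lemma square_zero_sum_pairP (z0 z1 : F) : z0 != 0 -> z1 != 0 ->
  (exists r0 r1, [/\ nonzero_square r0, nonzero_square r1 & r0 * z0 + r1 * z1 = 0]) <->
  (square (-1 : F) == (square z0 == square z1)).
Proof.
move=> z0_neq0 z1_neq0; rewrite -nonzero_square_opp_ratio //; split.
  move=> [r0 [r1 [sr0 sr1 sum0]]].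
  have r1_neq0 : r1 != 0 by case/andP: sr1.
  have -> : - z1 / z0 = r0 / r1.
    by apply/eqP; rewrite eqr_div // mulNr eq_sym -subr_eq0 opprK [z1 * _]mulrC sum0.
  by apply: (nonzero_squareM Fp_odd); rewrite ?nonzero_squareV.
by exists (- z1 / z0), 1; rewrite nonzero_square1 divfK // mul1r addNr.
Qed.

Lemma square_zero_sum_of_triple (T : finType) (I : {set T}) (z : T -> F) (i0 i1 j : T) :
  [/\ i0 \in I, i1 \in I & j \in I] -> [/\ i0 != i1, j != i0 & j != i1] ->
  [/\ z i0 != 0, z i1 != 0 & z j != 0] -> square (z i0) = square (z i1) ->
  weighted_zero_sum nonzero_square I z.
Proof.
move=> [Ii0 Ii1 Ij] [i01 ji0 ji1] [z0 z1 zj] s01.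
set t := \sum_(i | (i \in I) && (i != i0) && (i != i1) && (i != j)) z i.
(* [t + z j] and [t + 4 z j] cannot both vanish. *)
have [g sq_g tg0] : exists2 g, nonzero_square g & t + g * z j != 0.
  have [tz0 | ] := eqVneq (t + z j) 0; last by exists 1; rewrite ?nonzero_square1 ?mul1r.
  exists (2 ^ 2)%:R.
    by rewrite /nonzero_square natrX expf_neq0 ?natFp_neq0 ?square_sqr ?(leq_trans _ q_ge7).
  rewrite -[(2 ^ 2)%:R]/(4%:R) -nat1r mulrDl mul1r addrA tz0 add0r.
  by rewrite mulf_neq0 // natFp_neq0 // (leq_trans _ q_ge7).
have [a [b [sa sb ab]]] : exists a b, [/\ nonzero_square a, nonzero_square b &
    a + b = - (t + g * z j) / z i0].
  by apply: sum_of_two_squares; rewrite mulf_neq0 ?oppr_eq0 ?invr_eq0.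
exists (fun i => if i == i0 then a else if i == i1 then b * (z i0 / z i1)
                 else if i == j then g else 1) => [i _|].
  case: ifP => // _; case: ifP => [_ | _]; last by case: ifP => // _; exact: nonzero_square1.
  by rewrite nonzero_squareM ?nonzero_square_div ?s01 ?Fp_odd.
rewrite (bigD1 i0) //= (bigD1 i1) /=; last by rewrite Ii1 eq_sym i01.
rewrite (bigD1 j) /=; last by rewrite Ij ji0 ji1.
rewrite (eq_bigr z) => [|i /andP[/andP[/andP[_ /negbTE->] /negbTE->] /negbTE->]]; last first.
  by rewrite mul1r.
rewrite !eqxx (eq_sym i1) (negbTE i01) (negbTE ji0) (negbTE ji1) -/t.
rewrite mulrA divfK // !addrA -mulrDl ab divfK //.
by rewrite -addrA [g * _ + _]addrC addNr.
Qed.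

Lemma square_weighted_zero_sumP (T : finType) (I : {set T}) (z : T -> F) :
  weighted_zero_sum nonzero_square I z <->
  square_admissible (square (-1 : F)) #|[set i in I | z i != 0]|
                    #|[set i in I | (z i != 0) && ~~ square (z i)]|.
Proof.
apply: iff_trans (weighted_zero_sum_support _ _ nonzero_square1) _.
have -> : [set i in I | (z i != 0) && ~~ square (z i)] =
          [set i in [set i in I | z i != 0] | ~~ square (z i)].
  by apply/setP => i; rewrite !inE andbA.
set W := [set i in I | z i != 0].
have Wz i : i \in W -> z i != 0 by rewrite inE => /andP[].
rewrite /square_admissible; case: (ltngtP #|W| 2) => [W_lt2 | W_gt2 | ].
- move: W_lt2; rewrite ltnS leq_eqVlt ltnS leqn0 => /orP[/cards1P[i0 W0] | /eqP/cards0_eq W0].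
    rewrite W0 cards1; split=> // -[r rW]; rewrite big_set1 => /eqP.
    rewrite mulf_eq0 (negbTE (Wz i0 _)) ?W0 ?set11 // orbF.
    by case/andP: (rW i0 (set11 i0)) => /negbTE->.
  by rewrite W0 cards0; split=> // _; exists (fun=> 1) => [i|]; rewrite ?inE ?big_set0.
- rewrite !gtn_eqF ?(ltn_trans _ W_gt2) //; split=> // _.
  have [i0 [i1 [j [Wi0 Wi1 Wj i01 [ji0 ji1 s01]]]]] :=
    exists_pair_same_class (fun i => square (z i)) W_gt2.
  by apply: (square_zero_sum_of_triple (i0 := i0) (i1 := i1) (j := j)); rewrite ?Wz.
move=> /eqP/cards2P[i0 [i1 [i01 W01]]].
have [z0 z1] : z i0 != 0 /\ z i1 != 0 by rewrite !Wz // W01 !inE eqxx ?orbT.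
rewrite W01 cards2 i01 card_set2_pred //=.
have -> : (odd (~~ square (z i0) + ~~ square (z i1)) != square (-1 : F)) =
          (square (-1 : F) == (square (z i0) == square (z i1))).
  by case: (square (z i0)); case: (square (z i1)); case: (square (-1 : F)).
apply: iff_trans (square_zero_sum_pairP z0 z1).
have sum2 w : \sum_(i in [set i0; i1]) w i * z i = w i0 * z i0 + w i1 * z i1.
  by rewrite big_setU1 ?big_set1 // inE.
split=> [[w wP] | [r0 [r1 [sr0 sr1 s0]]]].
  by rewrite sum2 => s0; exists (w i0), (w i1); split=> //; apply: wP; rewrite !inE eqxx ?orbT.
exists (fun i => if i == i0 then r0 else r1) => [i _|]; first by case: ifP.
by rewrite sum2 eqxx eq_sym (negbTE i01).
Qed.

End PrimeFieldSquares.

(** * Units modulo p^2 *)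

Section PrimeSquareUnits.
Variable p : nat.
Hypotheses (p_pr : prime p) (p_odd : odd p).
Local Notation R := 'Z_(p ^ 2).

Lemma p2_gt1 : (1 < p ^ 2)%N.
Proof. by rewrite -(expn0 p) ltn_exp2l ?prime_gt1. Qed.

Lemma unitZp2E m : ((m%:R : R) \is a GRing.unit) = ~~ (p %| m)%N.
Proof. by rewrite unitZpE ?p2_gt1 // coprime_pexpl // prime_coprime. Qed.

Lemma natp_neq0 : p%:R != 0 :> R.
Proof.
rewrite -(val_eqE (p%:R : R) 0) /= val_Zp_nat ?p2_gt1 // modn_small -?lt0n ?prime_gt0 //.
by rewrite -{1}(expn1 p) ltn_exp2l ?prime_gt1.
Qed.

Lemma nonunitP (x : R) : reflect (exists t : R, x = p%:R * t) (x \isn't a GRing.unit).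
Proof.
apply: (iffP idP) => [|[t ->]]; last by rewrite unitrM unitZp2E dvdnn.
rewrite -[x]natr_Zp unitZp2E negbK => /dvdnP[k ->].
by exists k%:R; rewrite natrM mulrC.
Qed.

Lemma nonunit_sum (T : Type) (r : seq T) (P : pred T) (y : T -> R) :
  (forall i, P i -> y i \isn't a GRing.unit) -> \sum_(i <- r | P i) y i \isn't a GRing.unit.
Proof.
move=> nUy; apply: (big_ind (fun x : R => x \isn't a GRing.unit)) => //=.
by move=> _ _ /nonunitP[a ->] /nonunitP[b ->]; apply/nonunitP; exists (a + b); rewrite mulrDr.
Qed.

Lemma unit_add_nonunit (u v : R) :
  u \is a GRing.unit -> v \isn't a GRing.unit -> u + v \is a GRing.unit.
Proof.
move=> Uu /nonunitP[s Dv]; apply: contraLR Uu => /nonunitP[t Duv]; apply/nonunitP.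
by exists (t - s); rewrite mulrBr -Duv -Dv addrK.
Qed.

Lemma natp_mul_unit_neq0 (e : R) : e \is a GRing.unit -> p%:R * e != 0.
Proof.
move=> Ue; apply: contra natp_neq0 => /eqP/(congr1 ( *%R^~ e^-1)).
by rewrite mulrK // mul0r => ->.
Qed.

Lemma nonzero_nonunitP (y : R) : y \isn't a GRing.unit -> y != 0 ->
  exists2 e, e \is a GRing.unit & y = p%:R * e.
Proof.
move=> /nonunitP[e ->] pe0; exists e => //; move: pe0; apply: contra_neqT => /nonunitP[s ->].
by rewrite mulrA -natrM mulnn pchar_Zp ?p2_gt1 ?mul0r.
Qed.

Lemma exists_unit_pair (t : R) : exists2 c, c \is a GRing.unit & - t - c \is a GRing.unit.
Proof.
have [U1 | nU1] := boolP (- t - 1 \is a GRing.unit); first by exists 1; rewrite ?unitr1.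
exists 2%:R; first by rewrite unitZp2E -prime_coprime // coprimen2.
apply: contraR nU1 => nU2.
have -> : - t - 1 = 1 + (- t - 2%:R).
  by rewrite addrCA -[2%:R]/(1 + 1 : R) opprD addrA -addrA addNKr.
by apply: unit_add_nonunit; rewrite ?unitr1.
Qed.

Lemma unit_zero_sum_of_pair (T : finType) (I : {set T}) (y : T -> R) (i0 i1 : T)
    (g e0 e1 t : R) :
  i0 \in I -> i1 \in I -> i0 != i1 -> e0 \is a GRing.unit -> e1 \is a GRing.unit ->
  y i0 = g * e0 -> y i1 = g * e1 ->
  \sum_(i | (i \in I) && (i != i0) && (i != i1)) y i = g * t ->
  weighted_zero_sum [pred u | u \is a GRing.unit] I y.
Proof.
move=> Ii0 Ii1 i01 Ue0 Ue1 Dy0 Dy1 Dt; have [c Uc Utc] := exists_unit_pair t.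
exists (fun i => if i == i0 then c / e0 else if i == i1 then (- t - c) / e1 else 1) => [i _|].
  rewrite /=; case: ifP => _; first by rewrite unitrM unitrV Uc.
  by case: ifP => _; rewrite ?unitrM ?unitrV ?Utc ?unitr1.
rewrite (bigD1 i0) //= (bigD1 i1) /=; last by rewrite Ii1 eq_sym.
rewrite (eq_bigr y) => [|i /andP[/andP[_ /negbTE->] /negbTE->]]; last by rewrite mul1r.
rewrite Dt eqxx eq_sym (negbTE i01) eqxx Dy0 Dy1 mulrCA divrK // mulrCA divrK //.
by rewrite -!mulrDr [- t - c + t]addrC addNKr subrr mulr0.
Qed.

Section UnitClasses.
Variables (T : finType) (I : {set T}) (y : T -> R).
Local Notation U := [set i in I | y i \is a GRing.unit].
Local Notation V := [set i in I | (y i \isn't a GRing.unit) && (y i != 0)].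

Lemma unit_weighted_zero_sum_admissible :
  weighted_zero_sum [pred u | u \is a GRing.unit] I y -> unit_admissible #|U| #|V|.
Proof.
move=> [u /= Uu /eqP sum0]; apply/andP; split.
  apply: contraTneq sum0 => /eqP/cards1P[i0 U0].
  have /setIdP[Ii0 Uy0] : i0 \in U by rewrite U0 set11.
  rewrite (bigD1 i0) //=.
  have : u i0 * y i0 + \sum_(i in I | i != i0) u i * y i \is a GRing.unit.
    apply: unit_add_nonunit; first by rewrite unitrM Uu.
    apply: nonunit_sum => i /andP[Ii ii0]; rewrite unitrM negb_and; apply/orP; right.
    by apply: contraNN ii0 => Uyi; rewrite -in_set1 -U0 inE Ii.
  by apply: contraTneq => ->; rewrite unitr0.
apply: contraTN sum0 => /andP[/eqP/cards0_eq U0 /cards1P[i0 V0]].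
have /setIdP[Ii0 /andP[nUy0 y0_neq0]] : i0 \in V by rewrite V0 set11.
rewrite (bigD1 i0) //= big1 ?addr0 => [|i /andP[Ii ii0]]; last first.
  have [Uyi | nUyi] := boolP (y i \is a GRing.unit).
    have : i \in U by rewrite inE Ii Uyi.
    by rewrite U0 inE.
  have : i \notin V by rewrite V0 inE.
  by rewrite inE Ii nUyi /= negbK => /eqP->; rewrite mulr0.
have [e Ue ->] := nonzero_nonunitP nUy0 y0_neq0.
by rewrite mulrCA natp_mul_unit_neq0 // unitrM Uu.
Qed.

Lemma unit_weighted_zero_sum_of_admissible :
  unit_admissible #|U| #|V| -> weighted_zero_sum [pred u | u \is a GRing.unit] I y.
Proof.
case/andP => U_neq1 UV; have [U_gt1 | U_le1] := ltnP 1 #|U|.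
  have /card_gt1P[i0 [i1 [/setIdP[Ii0 Uy0] /setIdP[Ii1 Uy1] i01]]] := U_gt1.
  by apply: (unit_zero_sum_of_pair (g := 1) Ii0 Ii1 i01 Uy0 Uy1); rewrite mul1r.
have U0 : #|U| = 0%N by move: U_le1 U_neq1; case: #|U| => [|[|]].
have nUy i : i \in I -> y i \isn't a GRing.unit.
  move=> Ii; apply/negP => Uyi; have : i \in U by rewrite inE Ii Uyi.
  by rewrite (cards0_eq U0) inE.
move: UV; rewrite U0 /= => V_neq1; have [V_gt1 | V_le1] := ltnP 1 #|V|.
  have /card_gt1P[i0 [i1 [/setIdP[Ii0 /andP[nUy0 y0]] /setIdP[Ii1 /andP[nUy1 y1]] i01]]] :=
    V_gt1.
  have [e0 Ue0 Dy0] := nonzero_nonunitP nUy0 y0.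
  have [e1 Ue1 Dy1] := nonzero_nonunitP nUy1 y1.
  have /nonunitP[t Dt] :
      \sum_(i | (i \in I) && (i != i0) && (i != i1)) y i \isn't a GRing.unit.
    by apply: nonunit_sum => i /andP[/andP[Ii _] _]; apply: nUy.
  exact: unit_zero_sum_of_pair Ii0 Ii1 i01 Ue0 Ue1 Dy0 Dy1 Dt.
have V0 : #|V| = 0%N by move: V_le1 V_neq1; case: #|V| => [|[|]].
exists (fun=> 1) => [i _|]; first exact: unitr1.
apply: big1 => i Ii; rewrite mul1r; apply/eqP; apply: contraT => yi_neq0.
have : i \in V by rewrite inE Ii nUy.
by rewrite (cards0_eq V0) inE.
Qed.

Lemma unit_weighted_zero_sumP :
  weighted_zero_sum [pred u | u \is a GRing.unit] I y <-> unit_admissible #|U| #|V|.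
Proof.
by split; [exact: unit_weighted_zero_sum_admissible | exact: unit_weighted_zero_sum_of_admissible].
Qed.

End UnitClasses.

End PrimeSquareUnits.

(** * Reduction modulo p^2 and modulo q *)

Section ReduceZp.
Variables (n : nat) (R : pzRingType).

Definition reduceZp (a : 'Z_n) : R := (a : nat)%:R.

Hypotheses (n_gt1 : (1 < n)%N) (n_eq0 : n%:R = 0 :> R).

Lemma reduceZp_nat m : reduceZp m%:R = m%:R.
Proof.
by rewrite /reduceZp val_Zp_nat // [in RHS](divn_eq m n) natrD natrM n_eq0 mulr0 add0r.
Qed.

Lemma reduceZpD a b : reduceZp (a + b) = reduceZp a + reduceZp b.
Proof. by rewrite -[a]natr_Zp -[b]natr_Zp -natrD !reduceZp_nat natrD. Qed.

Lemma reduceZpM a b : reduceZp (a * b) = reduceZp a * reduceZp b.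
Proof. by rewrite -[a]natr_Zp -[b]natr_Zp -natrM !reduceZp_nat natrM. Qed.

Lemma reduceZp_sum (I : Type) (r : seq I) (P : pred I) (F : I -> 'Z_n) :
  reduceZp (\sum_(i <- r | P i) F i) = \sum_(i <- r | P i) reduceZp (F i).
Proof. by apply: (big_morph _ reduceZpD); rewrite /reduceZp mulr0n. Qed.

End ReduceZp.

Arguments reduceZp {n R}.

Lemma legendre_sqr (r v : nat) : ~~ (r %| v)%N -> legendre r v ^+ 2 = 1.
Proof. by move=> r_ndvd_v; rewrite /legendre (negbTE r_ndvd_v); case: ifP. Qed.

Section ChineseRemainder.
Variables p q : nat.
Hypotheses (p_pr : prime p) (q_pr : prime q) (p_neq_q : p != q).
Local Notation n := (p ^ 2 * q)%N.
Local Notation modp2 := (@reduceZp n 'Z_(p ^ 2)).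
Local Notation modq := (@reduceZp n 'F_q).

Lemma coprime_p2q : coprime (p ^ 2) q.
Proof. by rewrite coprime_pexpl // prime_coprime // dvdn_prime2. Qed.

Lemma n_gt1 : (1 < n)%N.
Proof. by rewrite (leq_trans (p2_gt1 p_pr)) // leq_pmulr // prime_gt0. Qed.

Lemma n_eq0_modp2 : n%:R = 0 :> 'Z_(p ^ 2).
Proof. by rewrite natrM pchar_Zp ?mul0r // p2_gt1. Qed.

Lemma n_eq0_modq : n%:R = 0 :> 'F_q.
Proof. by rewrite natrM pchar_Fp_0 // mulr0. Qed.

Definition crt (u : 'Z_(p ^ 2)) (r : 'F_q) : 'Z_n := (chinese (p ^ 2) q u r)%:R.

Lemma modp2_crt u r : modp2 (crt u r) = u.
Proof.
rewrite reduceZp_nat ?n_gt1 ?n_eq0_modp2 // -(Zp_nat_mod (p2_gt1 p_pr)).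
by rewrite chinese_modl ?coprime_p2q // Zp_nat_mod ?p2_gt1 // natr_Zp.
Qed.

Lemma modq_crt u r : modq (crt u r) = r.
Proof.
rewrite reduceZp_nat ?n_gt1 ?n_eq0_modq // -(Fp_nat_mod q_pr).
by rewrite chinese_modr ?coprime_p2q // Fp_nat_mod // natr_Zp.
Qed.

Lemma reduceZp_eq0 (a : 'Z_n) : modp2 a = 0 -> modq a = 0 -> a = 0.
Proof.
move=> /eqP; rewrite -(val_eqE _ (0 : 'Z_(p ^ 2))) /= val_Zp_nat ?p2_gt1 // => p2_dvd_a.
move=> /eqP; rewrite /reduceZp natFp_eq0 // => q_dvd_a.
have : (n %| a)%N by rewrite Gauss_dvd ?coprime_p2q // q_dvd_a andbT.
have a_lt_n : (a < n)%N by have := ltn_ord a; rewrite [X in (_ < X)%N -> _]Zp_cast ?n_gt1.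
by rewrite /dvdn modn_small // => /eqP a0; apply: val_inj.
Qed.

Lemma primes_n : perm_eq (primes n) [:: p; q].
Proof.
apply: uniq_perm; rewrite ?primes_uniq //= ?inE ?andbT // => r.
by rewrite primesM ?expn_gt0 ?prime_gt0 // primesX // !primes_prime // !inE.
Qed.

Lemma jacobiE (a : 'Z_n) : ~~ (p %| a)%N -> jacobi a = legendre q a.
Proof.
move=> p_ndvd_a; rewrite /jacobi (perm_big _ primes_n) !big_cons big_nil /= mulr1.
rewrite !lognM ?expn_gt0 ?prime_gt0 // !logn_prime // eqxx (eq_sym q) (negbTE p_neq_q) /=.
by rewrite eqxx -[(1 + 1 + 0)%N]/2%N -[(0 + 0 + true)%N]/1%N legendre_sqr // mul1r.
Qed.

Lemma Sn_reduceE (a : 'Z_n) :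
  (a \in Sn n) = (modp2 a \is a GRing.unit) && nonzero_square (modq a).
Proof.
have Ua : (a \is a GRing.unit) = ~~ (p %| a)%N && ~~ (q %| a)%N.
  by rewrite -[in LHS](natr_Zp a) unitZpE ?n_gt1 // coprimeMl coprime_pexpl // !prime_coprime.
rewrite inE Ua /reduceZp unitZp2E // /nonzero_square natFp_eq0 //.
case: (p %| a)%N / boolP => //= p_ndvd_a; case: (q %| a)%N / boolP => //= q_ndvd_a.
rewrite jacobiE // /legendre (negbTE q_ndvd_a).
by rewrite (square_natE q_pr); case: ifP.
Qed.

Lemma weighted_zero_sum_SnP (T : finType) (I : {set T}) (x : T -> 'Z_n) :
  weighted_zero_sum [pred a | a \in Sn n] I x <->
  weighted_zero_sum [pred u | u \is a GRing.unit] I (fun i => modp2 (x i)) /\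
  weighted_zero_sum nonzero_square I (fun i => modq (x i)).
Proof.
have modp2_sum w : modp2 (\sum_(i in I) w i * x i) = \sum_(i in I) modp2 (w i) * modp2 (x i).
  rewrite reduceZp_sum ?n_gt1 ?n_eq0_modp2 //.
  by apply: eq_bigr => i _; rewrite reduceZpM ?n_gt1 ?n_eq0_modp2.
have modq_sum w : modq (\sum_(i in I) w i * x i) = \sum_(i in I) modq (w i) * modq (x i).
  rewrite reduceZp_sum ?n_gt1 ?n_eq0_modq //.
  by apply: eq_bigr => i _; rewrite reduceZpM ?n_gt1 ?n_eq0_modq.
split=> [[w Sw sum0] | [[u Uu sum_u] [r Sr sum_r]]].
  split.
    exists (fun i => modp2 (w i)) => [i /Sw /= | ]; first by rewrite Sn_reduceE => /andP[].
    by rewrite -modp2_sum sum0 /reduceZp mulr0n.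
  exists (fun i => modq (w i)) => [i /Sw /= | ]; first by rewrite Sn_reduceE => /andP[].
  by rewrite -modq_sum sum0 /reduceZp mulr0n.
exists (fun i => crt (u i) (r i)) => [i Ii | ].
  by rewrite /= Sn_reduceE modp2_crt modq_crt; apply/andP; split; [apply: Uu | apply: Sr].
apply: reduceZp_eq0; [rewrite modp2_sum -[RHS]sum_u | rewrite modq_sum -[RHS]sum_r].
  by apply: eq_bigr => i _; rewrite modp2_crt.
by apply: eq_bigr => i _; rewrite modq_crt.
Qed.

End ChineseRemainder.

(** * Reduction to subsequence patterns *)

Definition unit_tag (R : unitRingType) (y : R) : nat :=
  if y \is a GRing.unit then 0%N else if y == 0 then 2%N else 1%N.

Definition square_tag (F : finFieldType) (z : F) : nat :=
  if z == 0 then 0%N else if square z then 1%N else 2%N.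

Lemma unit_tag_eq0 (R : unitRingType) (y : R) :
  (unit_tag y == 0%N) = (y \is a GRing.unit).
Proof. by rewrite /unit_tag; case: ifP => // _; case: ifP. Qed.

Lemma unit_tag_eq1 (R : unitRingType) (y : R) :
  (unit_tag y == 1%N) = (y \isn't a GRing.unit) && (y != 0).
Proof. by rewrite /unit_tag; case: ifP => // _; case: ifP. Qed.

Lemma square_tag_neq0 (F : finFieldType) (z : F) : (square_tag z != 0%N) = (z != 0).
Proof. by rewrite /square_tag; case: ifP => // _; case: ifP. Qed.

Lemma square_tag_eq2 (F : finFieldType) (z : F) :
  (square_tag z == 2%N) = (z != 0) && ~~ square z.
Proof. by rewrite /square_tag; case: ifP => // _; case: ifP. Qed.

Section DavenportSn.
Variables p q : nat.
Hypotheses (p_pr : prime p) (p_odd : odd p) (q_pr : prime q) (q_ge7 : (7 <= q)%N).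
Hypothesis p_neq_q : p != q.
Local Notation n := (p ^ 2 * q)%N.
Local Notation modp2 := (@reduceZp n 'Z_(p ^ 2)).
Local Notation modq := (@reduceZp n 'F_q).

Lemma has_Azs_Sn_admissible k (x : 'I_k -> 'Z_n) :
  has_Azs (Sn n) x <->
  has (admissible (square (-1 : 'F_q)) [seq unit_tag (modp2 (x i)) | i <- enum 'I_k]
                                        [seq square_tag (modq (x i)) | i <- enum 'I_k])
      (words [:: false; true] k).
Proof.
set e := square _; set ys := [seq _ | i <- _]; set zs := [seq _ | i <- _].
have admE (I : {set 'I_k}) : admissible e ys zs (set_mask I) =
  [&& I != set0,
      unit_admissible #|[set i in I | modp2 (x i) \is a GRing.unit]|
        #|[set i in I | (modp2 (x i) \isn't a GRing.unit) && (modp2 (x i) != 0)]| &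
      square_admissible e #|[set i in I | modq (x i) != 0]|
        #|[set i in I | (modq (x i) != 0) && ~~ square (modq (x i))]|].
  rewrite /admissible /unit_admissible_mask /square_admissible_mask has_set_mask -andbA.
  rewrite (count_set_mask _ (fun i => unit_tag_eq0 (modp2 (x i)))).
  rewrite (count_set_mask _ (fun i => unit_tag_eq1 (modp2 (x i)))).
  rewrite (count_set_mask _ (fun i => square_tag_neq0 (modq (x i)))).
  by rewrite (count_set_mask _ (fun i => square_tag_eq2 (modq (x i)))).
split.
  case/has_AzsE => I I0 /(weighted_zero_sum_SnP p_pr q_pr p_neq_q).
  case=> /(unit_weighted_zero_sumP p_pr p_odd) UA /(square_weighted_zero_sumP q_pr q_ge7) SA.
  apply/hasP; exists (set_mask I); last by rewrite admE I0 UA SA.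
  by apply/wordsP; rewrite size_map size_enum_ord; split=> //; apply/allP => -[].
case/hasP => m /wordsP[_ size_m]; rewrite -(set_mask_nth size_m) admE => /and3P[I0 UA SA].
apply/has_AzsE; exists [set i : 'I_k | nth false m i] => //.
apply/(weighted_zero_sum_SnP p_pr q_pr p_neq_q); split.
  exact/(unit_weighted_zero_sumP p_pr p_odd).
exact/(square_weighted_zero_sumP q_pr q_ge7).
Qed.

Lemma Azs_prop_Sn_5 : Azs_prop (Sn n) 5.
Proof.
move=> x; apply/has_Azs_Sn_admissible/five_terms_admissible; apply/wordsP;
  rewrite size_map size_enum_ord; split=> //; apply/allP => _ /mapP[i _ ->].
  by rewrite /unit_tag; do 2?case: ifP.
by rewrite /square_tag; do 2?case: ifP.
Qed.

Section Counterexample.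
Variable c : nat.
Hypothesis nsq_c : ~~ square (- c%:R : 'F_q).
Local Notation s := [:: q%:R; (p * q)%:R; (p ^ 2)%:R; (p ^ 2 * c)%:R].

Lemma counterexample_unit_tags : [seq unit_tag (modp2 a) | a <- s] = [:: 0; 1; 2; 2]%N.
Proof.
have q_unit : (q%:R : 'Z_(p ^ 2)) \is a GRing.unit by rewrite unitZp2E // dvdn_prime2.
rewrite /= !reduceZp_nat ?n_gt1 ?n_eq0_modp2 // /unit_tag q_unit unitZp2E // dvdn_mulr //=.
by rewrite natrM (negbTE (natp_mul_unit_neq0 p_pr q_unit)) (pchar_Zp (p2_gt1 p_pr)) unitr0 eqxx.
Qed.

Lemma counterexample_square_tags :
  [seq square_tag (modq a) | a <- s] =
  [:: 0%N; 0%N; 1%N; if square (-1 : 'F_q) then 2%N else 1%N].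
Proof.
have Fodd := Fp_odd q_pr q_ge7.
have p2_neq0 : ((p ^ 2)%:R : 'F_q) != 0.
  by rewrite natFp_eq0 // Euclid_dvdX // dvdn_prime2 // eq_sym andbT.
have c_neq0 : (c%:R : 'F_q) != 0.
  by apply: contraNneq nsq_c => ->; rewrite oppr0 square0.
have sq_c : square (c%:R : 'F_q) = ~~ square (-1 : 'F_q).
  move: nsq_c; rewrite -mulN1r square_mulE ?oppr_eq0 ?oner_eq0 //.
  by case: (square _); case: (square _).
rewrite /= !reduceZp_nat ?n_gt1 ?n_eq0_modq // natrM pchar_Fp_0 // mulr0 /square_tag eqxx.
rewrite (negbTE p2_neq0) natrX square_sqr natrM mulf_eq0.
rewrite (negbTE p2_neq0) (negbTE c_neq0) square_mulE // sq_c natrX square_sqr.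
by case: (square _).
Qed.

Lemma not_has_Azs_counterexample : ~ has_Azs (Sn n) (fun i : 'I_4 => nth 0 s i).
Proof.
move/has_Azs_Sn_admissible.
rewrite (map_nth_enum 0 s (fun a => unit_tag (modp2 a))) counterexample_unit_tags.
rewrite (map_nth_enum 0 s (fun a => square_tag (modq a))) counterexample_square_tags.
exact/negP/four_terms_inadmissible.
Qed.

End Counterexample.

End DavenportSn.

Local Close Scope ring_scope.

Theorem theorem4p5 (p' q : nat) :
  prime p' -> prime q -> p' != q -> (7 <= p')%N -> (7 <= q)%N ->
  is_DA (Sn (p' ^ 2 * q)) 5.
Proof.
move=> p_pr q_pr p_neq_q p_ge7 q_ge7.
have p_odd : odd p' by case/even_prime: p_pr => // p2; rewrite p2 in p_ge7.
split=> [|k Ak]; first exact: Azs_prop_Sn_5 p_pr p_odd q_pr q_ge7 p_neq_q.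
rewrite leqNgt ltnS; apply/negP => k_le4.
have [nu nsq_nu] := exists_nonsquare (Fp_odd q_pr q_ge7).
have nsq_c : ~~ square (- (val (- nu))%:R : 'F_q)%R by rewrite natr_Zp opprK.
apply: (not_has_Azs_counterexample p_pr p_odd q_pr q_ge7 p_neq_q nsq_c).
exact: Azs_prop_widen k_le4 Ak _.
Qed.
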